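(* The subgroup $E$ is $S_0$-invariant, and every proper $S_0$-invariant subgroup of $G$ is contained in $E$; thus $E$ is the unique maximal proper $S_0$-invariant subgroup of $G$. Moreover, if $H$ is a proper $S_0$-invariant subgroup of $E$, then in the reduced word of every element of $H$ each letter $a_i$ occurs either not at all or at least twice.
   Context: Let $G=\mathbb Z_2^{*\infty}$ be the free product of countably many copies of $\mathbb Z_2=\mathbb Z/2\mathbb Z$, with canonical generators $a_1,a_2,\dots$ ($a_i^2=e$). Every element has a unique reduced word in the $a_i$ (no two consecutive equal letters). $E\le G$ is the subgroup of all elements whose reduced word has even length. $S_0\subseteq\mathrm{End}(G)$ is the subsemigroup generated by: (1) for every $n\in\mathbb N$ and every choice of indices $i(1),\dots,i(n)$, the endomorphism with $a_k\mapsto a_{i(k)}$ for $1\le k\le n$ and $a_k\mapsto a_k$ for $k>n$ (''finite identification of letters''); (2) for every $k$, the conjugation $w\mapsto a_kwa_k$. A subgroup $H\le G$ is $S_0$-invariant if $\phi(H)\subseteq H$ for all $\phi\in S_0$. *)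

From mathcomp Require Import all_boot.
Set Implicit Arguments. Unset Strict Implicit. Unset Printing Implicit Defensive.

(* G = Z_2^{*oo}.  Generator a_i is encoded by the letter i : nat (letters
   are indexed from 0 instead of 1).  An element of G is represented by its
   unique reduced word: a list of letters with no two consecutive equal. *)
Definition word := seq nat.

Fixpoint reduced (w : word) : bool :=
  match w with
  | x :: ((y :: _) as w') => (x != y) && reduced w'
  | _ => true
  end.

(* free reduction using a_i^2 = e *)
Definition push (x : nat) (w : word) : word :=
  match w with
  | y :: w' => if x == y then w' else x :: w
  | [::] => [:: x]
  end.
Definition red (w : word) : word := foldr push [::] w.

Definition gmul (u v : word) : word := red (u ++ v).
Definition ginv (u : word) : word := red (rev u).
Definition gone : word := [::].

Definition is_subgroup (H : word -> Prop) : Prop :=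
  [/\ (forall w, H w -> reduced w),
      H gone,
      (forall u v, H u -> H v -> H (gmul u v)) &
      (forall u, H u -> H (ginv u))].

Definition is_proper (H : word -> Prop) : Prop :=
  exists w, reduced w /\ ~ H w.

Definition letter_endo (s : nat -> nat) (w : word) : word := red (map s w).

Definition fin_ident (n : nat) (i : nat -> nat) : word -> word :=
  letter_endo (fun k => if k < n then i k else k).

Definition conj_gen (k : nat) (w : word) : word := red (k :: w ++ [:: k]).

Inductive inS0 : (word -> word) -> Prop :=
  | S0_ident n i : inS0 (fin_ident n i)
  | S0_conj k : inS0 (conj_gen k)
  | S0_comp f g : inS0 f -> inS0 g -> inS0 (fun w => f (g w)).

Definition S0_invariant (H : word -> Prop) : Prop :=
  forall phi, inS0 phi -> forall w, H w -> H (phi w).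

Definition Evn (w : word) : Prop := reduced w /\ ~~ odd (size w).

From mathcomp Require Import all_boot.
Set Implicit Arguments. Unset Strict Implicit.

(* Reduced words represent the elements of G = Z_2^{*oo}, and free reduction
   [red] never changes the parity of the length, so the even-length elements E
   form a subgroup which every map of S_0 preserves (letter maps keep the
   length, conjugation adds two letters).
   The key observation is that an S_0-invariant subgroup H is stable under
   EVERY letter map a_k |-> a_(s k): a given word only involves finitely many
   letters, so on it such a map agrees with a finite identification.
   - If H contains a word w of odd length, collapsing all letters of w to a
     single letter x turns w into a_x; hence H contains all generators and
     H = G.  So a proper invariant subgroup lies in E.
   - If H <= E contains a word w in which some letter a_i occurs exactly once,
     collapsing the other letters of w to a_j (j <> i) yields a_i a_j or
     a_j a_i (the length stays even); relabelling then puts every product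
     a_x a_y (x <> y) into H, and these generate E, so H = E. *)

Lemma reduced_tail x w : reduced (x :: w) -> reduced w.
Proof. by case: w => //= y w /andP[]. Qed.

Lemma push_reduced x w : reduced w -> reduced (push x w).
Proof.
case: w => //= y w Hw; case: eqP => [_|/eqP ne]; first exact: reduced_tail Hw.
by rewrite /= ne.
Qed.

Lemma red_reduced w : reduced (red w).
Proof. by elim: w => //= x w; apply: push_reduced. Qed.

Lemma red_id w : reduced w -> red w = w.
Proof.
elim: w => //= x w IH Hw; rewrite IH; last exact: reduced_tail Hw.
by move: Hw; case: w {IH} => //= y w /andP[ne _]; rewrite (negbTE ne).
Qed.

Lemma odd_size_red w : odd (size (red w)) = odd (size w).
Proof.
elim: w => //= x w <-; case: (red w) => //= y u.
by case: eqP => //= _; rewrite negbK.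
Qed.

Lemma red_nseq m j : red (nseq m j) = if odd m then [:: j] else [::].
Proof. by elim: m => //= m ->; case: (odd m) => //=; rewrite eqxx. Qed.

Lemma foldr_push_nseq m j i t : i != j ->
  foldr push (i :: t) (nseq m j) = if odd m then j :: i :: t else i :: t.
Proof.
move=> ne; elim: m => //= m ->; case: (odd m) => /=; first by rewrite eqxx.
by rewrite eq_sym (negbTE ne).
Qed.

Lemma red_nseq_letter_nseq a b i j : i != j ->
  red (nseq a j ++ i :: nseq b j) =
  nseq (odd a) j ++ i :: nseq (odd b) j.
Proof.
move=> ne; rewrite /red foldr_cat /= -/(red _) red_nseq.
case: (odd b) => /=; last by rewrite foldr_push_nseq //; case: (odd a).
by rewrite (negbTE ne) foldr_push_nseq //; case: (odd a).
Qed.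

Lemma Evn_subgroup : is_subgroup Evn.
Proof.
split=> [w []| //| u v [_ Hu] [_ Hv] | u [_ Hu]] //; split;
  rewrite ?red_reduced // odd_size_red ?size_cat ?size_rev //.
by rewrite oddD (negbTE Hu) (negbTE Hv).
Qed.

Lemma Evn_proper : is_proper Evn.
Proof. by exists [:: 0]; split => // -[]. Qed.

Lemma Evn_S0_invariant : S0_invariant Evn.
Proof.
move=> phi; elim=> [n i | k | f g _ IHf _ IHg] w; last by move=> /IHg /IHf.
- move=> [_ Hw]; split; first exact: red_reduced.
  by rewrite odd_size_red size_map.
- move=> [_ Hw]; split; first exact: red_reduced.
  by rewrite odd_size_red /= size_cat addn1 /= negbK.
Qed.

Lemma fin_ident_letter_endo n s w : (forall x, x \in w -> x < n) ->
  fin_ident n s w = letter_endo s w.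
Proof. by move=> Hw; congr red; apply/eq_in_map => x /Hw ->. Qed.

Lemma S0_invariant_letter_endo H : S0_invariant H ->
  forall s w, H w -> H (letter_endo s w).
Proof.
move=> Hinv s w Hw; set n := (\max_(x <- w) x).+1.
rewrite -(@fin_ident_letter_endo n); first exact: Hinv (S0_ident n s) _ Hw.
by move=> x xw; rewrite ltnS; apply: leq_bigmax_seq xw _.
Qed.

Lemma letters_generate H : is_subgroup H -> (forall x, H [:: x]) ->
  forall w, reduced w -> H w.
Proof.
case=> _ H1 Hmul _ Hx; elim=> // x u IH Ru.
by rewrite -(red_id Ru) -cat1s; apply: Hmul (Hx x) (IH (reduced_tail Ru)).
Qed.

Lemma pairs_generate_Evn H : is_subgroup H ->
  (forall x y, x != y -> H [:: x; y]) -> forall w, Evn w -> H w.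
Proof.
case=> _ H1 Hmul _ Hxy w [Rw Ew].
elim: (size w) {-2}w (leqnn (size w)) Rw Ew => [|m IH] [|x [|y u]] //= Hs.
move=> /andP[nxy Ru]; rewrite negbK => Eu.
rewrite -(red_id (w := [:: x, y & u])) /= ?nxy ?Ru //.
apply: (Hmul [:: x; y] u) (Hxy _ _ nxy) (IH u _ (reduced_tail Ru) Eu).
exact: leq_trans (leqnSn _) Hs.
Qed.

Lemma map_const_nseq (x : nat) (w : word) : map (fun=> x) w = nseq (size w) x.
Proof. by elim: w => //= y w ->. Qed.

Lemma odd_word_letters H : S0_invariant H ->
  forall w, H w -> odd (size w) -> forall x, H [:: x].
Proof.
move=> Hinv w Hw Hodd x; have := S0_invariant_letter_endo Hinv (fun=> x) Hw.
by rewrite /letter_endo map_const_nseq red_nseq Hodd.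
Qed.

Lemma collapse_single_letter (i j : nat) (w : word) : count_mem i w = 1 ->
  exists a b, map (fun k => if k == i then i else j) w =
              nseq a j ++ i :: nseq b j /\ a + b = (size w).-1.
Proof.
move=> Hc; have iw : i \in w by rewrite -has_pred1 has_count Hc.
move: Hc; case/splitPr: iw => p1 p2.
rewrite count_cat /= eqxx add1n addnS => -[/eqP].
rewrite addn_eq0 => /andP[/eqP/count_memPn n1 /eqP/count_memPn n2].
have map_other l : i \notin l ->
    map (fun k => if k == i then i else j) l = nseq (size l) j.
  by elim: l => //= k l IH; rewrite inE negb_or eq_sym => /andP[/negbTE-> /IH->].
exists (size p1), (size p2); rewrite map_cat /= eqxx !map_other //.
by rewrite size_cat /= addnS.
Qed.

Lemma single_letter_pair H : S0_invariant H -> (forall w, H w -> Evn w) ->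
  forall w i, H w -> count_mem i w = 1 -> exists p q, p != q /\ H [:: p; q].
Proof.
move=> Hinv HE w i Hw Hc; set j := i.+1.
have nij : i != j by rewrite neq_ltn ltnSn.
have [a [b [Hmap Hab]]] := collapse_single_letter j Hc.
have := S0_invariant_letter_endo Hinv (fun k => if k == i then i else j) Hw.
rewrite /letter_endo Hmap red_nseq_letter_nseq //.
have : odd a = ~~ odd b.
  have [_ Ew] := HE _ Hw; have wn0 : size w > 0 by case: (w) Hc.
  move: Ew; rewrite -(prednK wn0) -Hab /= oddD.
  by case: (odd a); case: (odd b).
case: (odd b) => -> /= Hp; first by exists i, j.
by exists j, i; rewrite eq_sym.
Qed.

Lemma pair_all_pairs H : S0_invariant H ->
  forall p q, p != q -> H [:: p; q] -> forall x y, x != y -> H [:: x; y].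
Proof.
move=> Hinv p q npq Hpq x y nxy.
have := S0_invariant_letter_endo Hinv (fun k => if k == p then x else y) Hpq.
have nqp : q != p by rewrite eq_sym.
by rewrite /letter_endo /= eqxx (negbTE nqp) (negbTE nxy).
Qed.

Theorem mainTheorem6 :
  (is_subgroup Evn /\ is_proper Evn /\ S0_invariant Evn) /\
  (forall H : word -> Prop, is_subgroup H -> S0_invariant H -> is_proper H ->
     forall w, H w -> Evn w) /\
  (forall H : word -> Prop, is_subgroup H -> S0_invariant H ->
     (forall w, H w -> Evn w) -> (exists w, Evn w /\ ~ H w) ->
     forall w, H w -> forall i : nat, count_mem i w != 1).
Proof.
split; first exact: conj Evn_subgroup (conj Evn_proper Evn_S0_invariant).
split.
- move=> H Hsub Hinv [w0 [Rw0 Nw0]] w Hw.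
  have [Hred _ _ _] := Hsub; split; first exact: Hred.
  apply/negP => Hodd; apply/Nw0/(letters_generate Hsub) => //.
  exact: odd_word_letters Hinv w Hw Hodd.
- move=> H Hsub Hinv HE [w0 [Ew0 Nw0]] w Hw i; apply/eqP => Hc.
  have [p [q [npq Hpq]]] := single_letter_pair Hinv HE Hw Hc.
  by apply/Nw0/(pairs_generate_Evn Hsub) => //; apply: pair_all_pairs Hpq.
Qed.
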